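(* Let $(X,\tau,I)$ be a $*$-extremally disconnected ideal topological space and $\gamma$ an operation on $\tau$ such that $(X,\tau)$ is $\gamma$-regular. For $V\subseteq X$ the following are equivalent: (1) $V$ is $\gamma$-open; (2) $V$ is $\alpha$-$I$-open and weakly $I$-local closed; (3) $V$ is pre-$\gamma$-$I$-open and weakly $I$-local closed; (4) $V$ is pre-$I$-open and weakly $I$-local closed; (5) $V$ is semi-$I$-open and weakly $I$-local closed; (6) $V$ is $b$-$I$-open and weakly $I$-local closed.
   Context: Let $(X,\tau)$ be a topological space; $Cl$ and $Int$ denote closure and interior in $\tau$. An ideal on $X$ is a nonempty family $I$ of subsets of $X$ such that $A\in I$, $B\subseteq A$ imply $B\in I$, and $A,B\in I$ imply $A\cup B\in I$; $(X,\tau,I)$ is then called an ideal topological space. An operation on $\tau$ is a map $\gamma:\tau\to P(X)$ with $V\subseteq\gamma(V)$ for all $V\in\tau$. A subset $A\subseteq X$ is $\gamma$-open if for every $x\in A$ there is $U\in\tau$ with $x\in U$ and $\gamma(U)\subseteq A$; $\tau_\gamma$ denotes the family of $\gamma$-open sets (so $\tau_\gamma\subseteq\tau$), and complements of $\gamma$-open sets are $\gamma$-closed. $\tau_\gamma\text{-}Int(A)$ is the union of all $\gamma$-open sets contained in $A$, and $\tau_\gamma\text{-}Cl(A)$ is the intersection of all $\gamma$-closed sets containing $A$. The local function of $A$ is $A^*=\{x\in X: U\cap A\notin I \text{ for every } U\in\tau \text{ with } x\in U\}$, and $Cl^*(A)=A\cup A^*$ (the closure operator of a topology $\tau^*$ finer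 than $\tau$). A subset $A$ is pre-$\gamma$-$I$-open if $A\subseteq \tau_\gamma\text{-}Int(Cl^*(A))$. The space $(X,\tau)$ is $\gamma$-regular if for each $x\in X$ and each open $V$ containing $x$ there is an open $U$ containing $x$ with $\gamma(U)\subseteq V$ (equivalently, $\tau_\gamma=\tau$). $(X,\tau,I)$ is $*$-extremally disconnected if $Cl^*(V)$ is open for every open $V\subseteq X$ (equivalently, $Cl^*(Int(V))\subseteq Int(Cl^*(V))$ for every $V\subseteq X$). A set $A$ is: $\alpha$-$I$-open if $A\subseteq Int(Cl^*(Int(A)))$; pre-$I$-open if $A\subseteq Int(Cl^*(A))$; semi-$I$-open if $A\subseteq Cl^*(Int(A))$; $b$-$I$-open if $A\subseteq Int(Cl^*(A))\cup Cl^*(Int(A))$; weakly $I$-local closed if $A=U\cap K$ for some open $U$ and some $\tau^*$-closed $K$ (i.e. $K^*\subseteq K$). *)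

From Stdlib Require Import Classical.

Set Implicit Arguments.

Section Defs.
Variable X : Type.

Definition subset (A B : X -> Prop) : Prop := forall x, A x -> B x.
Definition setI (A B : X -> Prop) : X -> Prop := fun x => A x /\ B x.
Definition setU (A B : X -> Prop) : X -> Prop := fun x => A x \/ B x.

(* tau is a topology on X (families of subsets are taken up to extensional equality). *)
Definition is_topology (tau : (X -> Prop) -> Prop) : Prop :=
  (forall U V, (forall x, U x <-> V x) -> tau U -> tau V) /\
  tau (fun _ => True) /\
  (forall F : (X -> Prop) -> Prop,
      (forall U, F U -> tau U) -> tau (fun x => exists U, F U /\ U x)) /\
  (forall U V, tau U -> tau V -> tau (setI U V)).

Definition is_ideal (I : (X -> Prop) -> Prop) : Prop :=
  (exists A, I A) /\
  (forall A B, I A -> subset B A -> I B) /\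
  (forall A B, I A -> I B -> I (setU A B)).

Variable tau : (X -> Prop) -> Prop.
Variable I : (X -> Prop) -> Prop.
Variable gamma : (X -> Prop) -> (X -> Prop).

Definition is_operation : Prop := forall V, tau V -> subset V (gamma V).

Definition Int (A : X -> Prop) : X -> Prop :=
  fun x => exists U, tau U /\ U x /\ subset U A.

Definition Cl (A : X -> Prop) : X -> Prop :=
  fun x => forall U, tau U -> U x -> exists y, U y /\ A y.

Definition gamma_open (A : X -> Prop) : Prop :=
  forall x, A x -> exists U, tau U /\ U x /\ subset (gamma U) A.

Definition gamma_Int (A : X -> Prop) : X -> Prop :=
  fun x => exists W, gamma_open W /\ W x /\ subset W A.

Definition star (A : X -> Prop) : X -> Prop :=
  fun x => forall U, tau U -> U x -> ~ I (setI U A).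

Definition Clstar (A : X -> Prop) : X -> Prop := setU A (star A).

Definition pre_gamma_I_open (A : X -> Prop) : Prop :=
  subset A (gamma_Int (Clstar A)).

Definition gamma_regular : Prop :=
  forall x V, tau V -> V x -> exists U, tau U /\ U x /\ subset (gamma U) V.

Definition star_extremally_disconnected : Prop :=
  forall V, tau V -> tau (Clstar V).

Definition alpha_I_open (A : X -> Prop) : Prop :=
  subset A (Int (Clstar (Int A))).
Definition pre_I_open (A : X -> Prop) : Prop :=
  subset A (Int (Clstar A)).
Definition semi_I_open (A : X -> Prop) : Prop :=
  subset A (Clstar (Int A)).
Definition b_I_open (A : X -> Prop) : Prop :=
  subset A (setU (Int (Clstar A)) (Clstar (Int A))).

Definition weakly_I_local_closed (A : X -> Prop) : Prop :=
  exists U K, tau U /\ subset (star K) K /\ (forall x, A x <-> (U x /\ K x)).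

End Defs.


(* Under gamma-regularity the gamma-open sets are exactly the open sets, and
   every open set satisfies each of conditions (2)-(6).  Conversely, all of
   them imply pre-I-openness: for b-I-open sets because *-extremal
   disconnectedness makes Cl*(Int V) an open subset of Cl*(V).  Finally, if
   V = U ∩ K with U open and K^* ⊆ K, then Cl*(V) ⊆ K, so a pre-I-open V is
   the open set U ∩ Int(Cl*(V)). *)

Section IdealSpace.
Variables (X : Type) (tau : (X -> Prop) -> Prop) (I : (X -> Prop) -> Prop)
  (gamma : (X -> Prop) -> (X -> Prop)).
Hypothesis Htop : is_topology tau.
Hypothesis HI : is_ideal I.
Hypothesis Hop : is_operation tau gamma.
Hypothesis Hreg : gamma_regular tau gamma.
Hypothesis Hed : star_extremally_disconnected tau I.

Lemma Int_subset (A : X -> Prop) : subset (Int tau A) A.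
Proof. intros x [U [_ [Ux HUA]]]. exact (HUA x Ux). Qed.

Lemma Int_mono (A B : X -> Prop) : subset A B -> subset (Int tau A) (Int tau B).
Proof.
  intros HAB x [U [HU [Ux HUA]]].
  exists U; split; [exact HU | split; [exact Ux |]].
  intros y Uy; exact (HAB y (HUA y Uy)).
Qed.

Lemma subset_Int_open (V : X -> Prop) : tau V -> subset V (Int tau V).
Proof.
  intros HV x Vx. exists V; split; [exact HV | split; [exact Vx |]].
  intros y Vy; exact Vy.
Qed.

Lemma open_Int (A : X -> Prop) : tau (Int tau A).
Proof.
  destruct Htop as [Hext [_ [Hunion _]]].
  apply (Hext (fun x => exists U, (tau U /\ subset U A) /\ U x)).
  - intros x; split.
    + intros [U [[HU HUA] Ux]]. exists U; auto.
    + intros [U [HU [Ux HUA]]]. exists U; auto.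
  - apply Hunion. intros U [HU _]; exact HU.
Qed.

Lemma open_of_subset_Int (V : X -> Prop) : subset V (Int tau V) -> tau V.
Proof.
  intros HV. destruct Htop as [Hext _].
  apply (Hext (Int tau V)); [| apply open_Int].
  intros x; split; [apply Int_subset | apply HV].
Qed.

Lemma subset_Clstar (A : X -> Prop) : subset A (Clstar tau I A).
Proof. intros x Ax; left; exact Ax. Qed.

Lemma star_mono (A B : X -> Prop) : subset A B -> subset (star tau I A) (star tau I B).
Proof.
  destruct HI as [_ [Hdown _]].
  intros HAB x Hx U HU Ux HIB. apply (Hx U HU Ux).
  apply (Hdown _ _ HIB). intros y [Uy Ay]; split; [exact Uy | exact (HAB y Ay)].
Qed.

Lemma Clstar_mono (A B : X -> Prop) :
  subset A B -> subset (Clstar tau I A) (Clstar tau I B).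
Proof.
  intros HAB x [Ax | Ax]; [left; exact (HAB x Ax) | right; exact (star_mono A B HAB x Ax)].
Qed.

Lemma Clstar_subset_star_closed (A K : X -> Prop) :
  subset A K -> subset (star tau I K) K -> subset (Clstar tau I A) K.
Proof.
  intros HAK HK x [Ax | Ax]; [exact (HAK x Ax) | exact (HK x (star_mono A K HAK x Ax))].
Qed.

Lemma gamma_open_subset_Int (W : X -> Prop) : gamma_open tau gamma W -> subset W (Int tau W).
Proof.
  intros HW x Wx. destruct (HW x Wx) as [U [HU [Ux HgU]]].
  exists U; split; [exact HU | split; [exact Ux |]].
  intros y Uy; exact (HgU y (Hop U HU y Uy)).
Qed.

Lemma gamma_openE (V : X -> Prop) : gamma_open tau gamma V <-> tau V.
Proof.
  split.
  - intros HV. apply open_of_subset_Int, gamma_open_subset_Int, HV.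
  - intros HV x Vx. exact (Hreg x V HV Vx).
Qed.

Lemma gamma_Int_subset_Int (A : X -> Prop) : subset (gamma_Int tau gamma A) (Int tau A).
Proof.
  intros x [W [HW [Wx HWA]]].
  exact (Int_mono W A HWA x (gamma_open_subset_Int W HW x Wx)).
Qed.

Lemma open_weakly_I_local_closed (V : X -> Prop) : tau V -> weakly_I_local_closed tau I V.
Proof.
  intros HV. exists V, (fun _ => True).
  split; [exact HV | split; [intros x _; exact Logic.I |]].
  intros x; split; [intros Vx; split; [exact Vx | exact Logic.I] | intros [Vx _]; exact Vx].
Qed.

Lemma pre_I_open_weakly_I_local_closed_open (V : X -> Prop) :
  pre_I_open tau I V -> weakly_I_local_closed tau I V -> tau V.
Proof.
  intros Hpre [U [K [HU [HK HV]]]].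
  assert (HVK : subset (Clstar tau I V) K).
  { apply Clstar_subset_star_closed; [intros x Vx; apply HV, Vx | exact HK]. }
  apply open_of_subset_Int. intros x Vx.
  destruct (Hpre x Vx) as [W [HW [Wx HWV]]].
  destruct Htop as [_ [_ [_ Hinter]]].
  exists (setI W U). split; [exact (Hinter W U HW HU) | split].
  - split; [exact Wx | apply HV, Vx].
  - intros y [Wy Uy]. apply HV. split; [exact Uy | exact (HVK y (HWV y Wy))].
Qed.

Lemma Clstar_Int_subset_Int_Clstar (V : X -> Prop) :
  subset (Clstar tau I (Int tau V)) (Int tau (Clstar tau I V)).
Proof.
  intros x Hx.
  apply (Int_mono _ _ (Clstar_mono _ _ (Int_subset V))).
  exact (subset_Int_open _ (Hed _ (open_Int V)) x Hx).
Qed.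

Lemma b_I_open_pre_I_open (V : X -> Prop) : b_I_open tau I V -> pre_I_open tau I V.
Proof.
  intros Hb x Vx.
  destruct (Hb x Vx) as [Hx | Hx]; [exact Hx | exact (Clstar_Int_subset_Int_Clstar V x Hx)].
Qed.

Lemma alpha_I_open_pre_I_open (V : X -> Prop) : alpha_I_open tau I V -> pre_I_open tau I V.
Proof.
  intros Ha x Vx. exact (Int_mono _ _ (Clstar_mono _ _ (Int_subset V)) _ (Ha x Vx)).
Qed.

Lemma pre_gamma_I_open_pre_I_open (V : X -> Prop) :
  pre_gamma_I_open tau I gamma V -> pre_I_open tau I V.
Proof. intros Hpg x Vx. exact (gamma_Int_subset_Int _ _ (Hpg x Vx)). Qed.

Lemma semi_I_open_pre_I_open (V : X -> Prop) : semi_I_open tau I V -> pre_I_open tau I V.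
Proof. intros Hs. apply b_I_open_pre_I_open. intros x Vx; right; exact (Hs x Vx). Qed.

Lemma open_pre_I_open (V : X -> Prop) : tau V -> pre_I_open tau I V.
Proof. intros HV x Vx. exact (Int_mono _ _ (subset_Clstar V) _ (subset_Int_open V HV x Vx)). Qed.

Lemma open_alpha_I_open (V : X -> Prop) : tau V -> alpha_I_open tau I V.
Proof.
  intros HV x Vx. apply (Int_mono _ _ (Clstar_mono _ _ (subset_Int_open V HV))).
  exact (open_pre_I_open V HV x Vx).
Qed.

Lemma open_pre_gamma_I_open (V : X -> Prop) : tau V -> pre_gamma_I_open tau I gamma V.
Proof.
  intros HV x Vx. exists V.
  split; [apply gamma_openE, HV | split; [exact Vx | apply subset_Clstar]].
Qed.

Lemma open_semi_I_open (V : X -> Prop) : tau V -> semi_I_open tau I V.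
Proof. intros HV x Vx. left. exact (subset_Int_open V HV x Vx). Qed.

Lemma open_b_I_open (V : X -> Prop) : tau V -> b_I_open tau I V.
Proof. intros HV x Vx. left. exact (open_pre_I_open V HV x Vx). Qed.

Lemma gamma_open_iff_weakly_I_local_closed (P : (X -> Prop) -> Prop) (V : X -> Prop) :
  (tau V -> P V) -> (P V -> pre_I_open tau I V) ->
  (gamma_open tau gamma V <-> P V /\ weakly_I_local_closed tau I V).
Proof.
  intros HoP HPpre. rewrite gamma_openE. split.
  - intros HV. split; [exact (HoP HV) | exact (open_weakly_I_local_closed V HV)].
  - intros [HP Hw]. exact (pre_I_open_weakly_I_local_closed_open V (HPpre HP) Hw).
Qed.

End IdealSpace.

Theorem theorem3p34 (X : Type) (tau : (X -> Prop) -> Prop) (I : (X -> Prop) -> Prop)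
  (gamma : (X -> Prop) -> (X -> Prop))
  (Htop : is_topology tau) (HI : is_ideal I) (Hop : is_operation tau gamma)
  (Hed : star_extremally_disconnected tau I) (Hreg : gamma_regular tau gamma)
  (V : X -> Prop) :
  (gamma_open tau gamma V <-> alpha_I_open tau I V /\ weakly_I_local_closed tau I V) /\
  (gamma_open tau gamma V <-> pre_gamma_I_open tau I gamma V /\ weakly_I_local_closed tau I V) /\
  (gamma_open tau gamma V <-> pre_I_open tau I V /\ weakly_I_local_closed tau I V) /\
  (gamma_open tau gamma V <-> semi_I_open tau I V /\ weakly_I_local_closed tau I V) /\
  (gamma_open tau gamma V <-> b_I_open tau I V /\ weakly_I_local_closed tau I V).
Proof.
  split; [| split; [| split; [| split]]];
    apply (gamma_open_iff_weakly_I_local_closed X tau I gamma Htop HI Hop Hreg);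
    eauto using open_alpha_I_open, alpha_I_open_pre_I_open, open_pre_gamma_I_open,
      pre_gamma_I_open_pre_I_open, open_pre_I_open, open_semi_I_open,
      semi_I_open_pre_I_open, open_b_I_open, b_I_open_pre_I_open.
Qed.
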